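(* Let $R$ be a Noetherian ring, let $I$ be a proper ideal of $R$, and let $n$ be an integer with $n\geq \operatorname{ara}(I)$. If every $(n+1)$-generated ideal $J\subseteq I$ with $\sqrt{J}=\sqrt{I}$ has an $n$-generated reduction, then $I$ has an $n$-generated reduction.
   Context: The arithmetic rank $\operatorname{ara}(I)$ of a proper ideal $I$ of a Noetherian ring $R$ is the least number $n$ such that $\sqrt{I}=\sqrt{(x_1,\ldots,x_n)R}$ for some $x_1,\ldots,x_n\in I$. A reduction of an ideal $I$ is an ideal $J\subseteq I$ such that $I^{m+1}=JI^m$ for some $m>0$; it is $n$-generated if it can be generated by $n$ elements. *)

From mathcomp Require Import all_boot all_algebra.
Set Implicit Arguments. Unset Strict Implicit. Unset Printing Implicit Defensive.
Import GRing.Theory.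
Local Open Scope ring_scope.

Section Ideals.
Variable R : comNzRingType.

Definition subI (I J : R -> Prop) : Prop := forall x, I x -> J x.
Definition eqI (I J : R -> Prop) : Prop := forall x, I x <-> J x.

Definition is_ideal (I : R -> Prop) : Prop :=
  [/\ I 0, (forall x y, I x -> I y -> I (x + y)) & (forall a x, I x -> I (a * x))].

Definition proper_ideal (I : R -> Prop) : Prop := is_ideal I /\ ~ I 1.

Definition noetherian : Prop :=
  forall f : nat -> R -> Prop,
    (forall k, is_ideal (f k)) -> (forall k, subI (f k) (f k.+1)) ->
    exists N, forall k, (N <= k)%N -> eqI (f k) (f N).

Definition gen_ideal (n : nat) (g : 'I_n -> R) : R -> Prop :=
  fun x => exists c : 'I_n -> R, x = \sum_(i < n) c i * g i.

Definition n_generated (n : nat) (J : R -> Prop) : Prop :=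
  exists g : 'I_n -> R, eqI J (gen_ideal g).

Definition rad (I : R -> Prop) : R -> Prop := fun x => exists k : nat, I (x ^+ k).

Definition prod_ideal (I J : R -> Prop) : R -> Prop :=
  fun x => exists k (a b : 'I_k -> R),
    (forall i, I (a i)) /\ (forall i, J (b i)) /\ x = \sum_(i < k) a i * b i.

Fixpoint pow_ideal (I : R -> Prop) (m : nat) : R -> Prop :=
  match m with
  | O => fun _ => True
  | S m' => prod_ideal I (pow_ideal I m')
  end.

Definition is_reduction (J I : R -> Prop) : Prop :=
  subI J I /\ exists m : nat, (0 < m)%N /\ eqI (pow_ideal I m.+1) (prod_ideal J (pow_ideal I m)).

Definition has_n_gen_reduction (n : nat) (I : R -> Prop) : Prop :=
  exists J, is_ideal J /\ n_generated n J /\ is_reduction J I.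

Definition ara_le (I : R -> Prop) (n : nat) : Prop :=
  exists m : nat, (m <= n)%N /\ exists x : 'I_m -> R,
    (forall i, I (x i)) /\ eqI (rad I) (rad (gen_ideal x)).

End Ideals.

From mathcomp Require Import all_boot all_algebra.
From Stdlib Require Import Classical ClassicalEpsilon FunctionalExtensionality PropExtensionality.
Set Implicit Arguments. Unset Strict Implicit. Unset Printing Implicit Defensive.
Import GRing.Theory.
Local Open Scope ring_scope.

(* Call a subideal K of I n-reducible when rad K = rad I and K has an
   n-generated reduction K'.  The ideal generated by the m <= n elements
   witnessing ara(I) <= n is n-reducible, being its own reduction.  If K is
   n-reducible and y is in I, then K' + (y) is (n+1)-generated with the
   radical of I, so it has an n-generated reduction K''; as K' + (y) is a
   reduction of K + (y) and reductions compose, K + (y) is n-reducible too.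
   By the ascending chain condition, adjoining elements of I one at a time
   reaches I itself. *)

Section IdealArithmetic.
Context {R : comNzRingType}.
Implicit Types (A B C I J K L M : R -> Prop) (x y : R).

Lemma eqI_eq A B : eqI A B -> A = B.
Proof.
move=> AB; apply: functional_extensionality => x.
by apply: propositional_extensionality; exact: AB.
Qed.

Lemma subI_antisym A B : subI A B -> subI B A -> eqI A B.
Proof. by move=> AB BA x; split; [apply: AB | apply: BA]. Qed.

Lemma subI_eq A B : subI A B -> subI B A -> A = B.
Proof. by move=> AB BA; apply/eqI_eq/subI_antisym. Qed.

Lemma subI_refl A : subI A A.
Proof. by []. Qed.

Lemma subI_trans A B C : subI A B -> subI B C -> subI A C.
Proof. by move=> AB BC x /AB /BC. Qed.

Definition sum_ideal A B : R -> Prop := fun z => exists a b, [/\ A a, B b & z = a + b].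

Definition principal y : R -> Prop := fun z => exists r, z = r * y.

Lemma principal0 y : principal y 0.
Proof. by exists 0; rewrite mul0r. Qed.

Lemma principal_id y : principal y y.
Proof. by exists 1; rewrite mul1r. Qed.

Lemma prod_ideal0 A B : prod_ideal A B 0.
Proof.
exists 0%N, (fun _ => 0), (fun _ => 0).
by split; [case | split; [case | rewrite big_ord0]].
Qed.

Lemma prod_idealD A B u v :
  prod_ideal A B u -> prod_ideal A B v -> prod_ideal A B (u + v).
Proof.
move=> [k1 [a1 [b1 [Aa1 [Bb1 ->]]]]] [k2 [a2 [b2 [Aa2 [Bb2 ->]]]]].
pose glue (f1 : 'I_k1 -> R) (f2 : 'I_k2 -> R) i :=
  match split i with inl j => f1 j | inr j => f2 j end.
exists (k1 + k2)%N, (glue a1 a2), (glue b1 b2).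
split; [by move=> i; rewrite /glue; case: (split i) | split].
- by move=> i; rewrite /glue; case: (split i).
- rewrite big_split_ord /glue; congr (_ + _); apply: eq_bigr => i _.
  + by rewrite (unsplitK (inl _ i) : split (lshift k2 i) = inl i).
  + by rewrite (unsplitK (inr _ i) : split (rshift k1 i) = inr i).
Qed.

Lemma prod_ideal_mul A B a b : A a -> B b -> prod_ideal A B (a * b).
Proof.
by move=> Aa Bb; exists 1%N, (fun _ => a), (fun _ => b); rewrite big_ord1.
Qed.

Lemma prod_ideal_ind A B (P : R -> Prop) :
  P 0 -> (forall u v, P u -> P v -> P (u + v)) ->
  (forall a b, A a -> B b -> P (a * b)) -> subI (prod_ideal A B) P.
Proof.
move=> P0 PD PM x [k [a [b [Aa [Bb ->]]]]].
by apply: (big_ind P) => // i _; apply: PM.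
Qed.

Lemma prod_idealS A A' B B' :
  subI A A' -> subI B B' -> subI (prod_ideal A B) (prod_ideal A' B').
Proof.
move=> AA' BB' x [k [a [b [Aa [Bb ->]]]]].
by exists k, a, b; split; [move=> i; apply: AA' | split; [move=> i; apply: BB' |]].
Qed.

Lemma prod_idealC A B : prod_ideal A B = prod_ideal B A.
Proof.
suff sub C D : subI (prod_ideal C D) (prod_ideal D C) by apply: subI_eq; apply: sub.
apply: prod_ideal_ind; [exact: prod_ideal0 | exact: prod_idealD |].
by move=> c d Cc Dd; rewrite mulrC; apply: prod_ideal_mul.
Qed.

Lemma prod_idealA A B C :
  prod_ideal (prod_ideal A B) C = prod_ideal A (prod_ideal B C).
Proof.
suff sub A' B' C' : subI (prod_ideal (prod_ideal A' B') C') (prod_ideal A' (prod_ideal B' C')).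
  apply: subI_eq; first exact: sub.
  rewrite prod_idealC (prod_idealC B); apply: subI_trans (sub _ _ _) _.
  by rewrite (prod_idealC C) (prod_idealC B).
apply: prod_ideal_ind; [exact: prod_ideal0 | exact: prod_idealD |].
move=> u c ABu C'c; move: u ABu.
apply: (prod_ideal_ind (P := fun u => prod_ideal A' (prod_ideal B' C') (u * c))).
- by rewrite mul0r; apply: prod_ideal0.
- by move=> u v; rewrite mulrDl; apply: prod_idealD.
- by move=> a b Aa Bb; rewrite -mulrA; apply: prod_ideal_mul => //; apply: prod_ideal_mul.
Qed.

Lemma prod_ideal_is_ideal A B : is_ideal A -> is_ideal (prod_ideal A B).
Proof.
case=> _ _ AM; split; [exact: prod_ideal0 | exact: prod_idealD |].
move=> c; apply: (prod_ideal_ind (P := fun u => prod_ideal A B (c * u))).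
- by rewrite mulr0; apply: prod_ideal0.
- by move=> u v; rewrite mulrDr; apply: prod_idealD.
- by move=> a b Aa Bb; rewrite mulrA; apply: prod_ideal_mul => //; apply: AM.
Qed.

Lemma prod_idealTl A : is_ideal A -> prod_ideal (fun _ => True) A = A.
Proof.
case=> A0 AD AM; apply: subI_eq.
- by apply: prod_ideal_ind => // a b _ Ab; apply: AM.
- by move=> x Ax; rewrite -(mul1r x); apply: prod_ideal_mul.
Qed.

Lemma prod_ideal_subl A B : is_ideal A -> subI (prod_ideal A B) A.
Proof.
case=> A0 AD AM; apply: prod_ideal_ind => // a b Aa _.
by rewrite mulrC; apply: AM.
Qed.

Lemma pow_ideal_is_ideal M j : is_ideal M -> is_ideal (pow_ideal M j).
Proof. by case: j => [|j] //= idM; apply: prod_ideal_is_ideal. Qed.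

Lemma pow_idealS J M j : subI J M -> subI (pow_ideal J j) (pow_ideal M j).
Proof. by move=> JM; elim: j => [|j IHj] //=; apply: prod_idealS. Qed.

Lemma pow_idealD M a b : is_ideal M ->
  subI (prod_ideal (pow_ideal M a) (pow_ideal M b)) (pow_ideal M (a + b)).
Proof.
move=> idM; elim: a => [|a IHa] /=.
  by rewrite prod_idealTl //; apply: pow_ideal_is_ideal.
by rewrite prod_idealA; apply: prod_idealS.
Qed.

Lemma pow_ideal_exp A x j : A x -> pow_ideal A j (x ^+ j).
Proof. by move=> Ax; elim: j => [|j IHj] //=; rewrite exprS; apply: prod_ideal_mul. Qed.

Lemma radS A B : subI A B -> subI (rad A) (rad B).
Proof. by move=> AB x [k Axk]; exists k; apply: AB. Qed.

Lemma sum_ideal0 A B : A 0 -> B 0 -> sum_ideal A B 0.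
Proof. by move=> A0 B0; exists 0, 0; rewrite addr0. Qed.

Lemma sum_idealD A B u v :
  (forall a a', A a -> A a' -> A (a + a')) -> (forall b b', B b -> B b' -> B (b + b')) ->
  sum_ideal A B u -> sum_ideal A B v -> sum_ideal A B (u + v).
Proof.
move=> AD BD [a [b [Aa Bb ->]]] [a' [b' [Aa' Bb' ->]]].
by exists (a + a'), (b + b'); split; [apply: AD | apply: BD | rewrite addrACA].
Qed.

Lemma sum_idealS A A' B B' :
  subI A A' -> subI B B' -> subI (sum_ideal A B) (sum_ideal A' B').
Proof. by move=> AA' BB' x [a [b [Aa Bb ->]]]; exists a, b; split; [apply: AA' | apply: BB' |]. Qed.

Lemma sum_ideal_subl A B : B 0 -> subI A (sum_ideal A B).
Proof. by move=> B0 x Ax; exists x, 0; rewrite addr0. Qed.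

Lemma sum_ideal_subr A B : A 0 -> subI B (sum_ideal A B).
Proof. by move=> A0 x Bx; exists 0, x; rewrite add0r. Qed.

Lemma prod_sum_idealDl A B C :
  subI (prod_ideal (sum_ideal A B) C) (sum_ideal (prod_ideal A C) (prod_ideal B C)).
Proof.
apply: prod_ideal_ind.
- by apply: sum_ideal0; apply: prod_ideal0.
- by move=> u v; apply: sum_idealD; apply: prod_idealD.
- move=> x c [a [b [Aa Bb ->]]] Cc; exists (a * c), (b * c).
  by split; [apply: prod_ideal_mul | apply: prod_ideal_mul | rewrite mulrDl].
Qed.

Lemma sum_principal_is_ideal K y : is_ideal K -> is_ideal (sum_ideal K (principal y)).
Proof.
case=> K0 KD KM; split.
- by apply: sum_ideal0 => //; apply: principal0.
- by move=> u v; apply: sum_idealD => // _ _ [r ->] [s ->]; exists (r + s); rewrite mulrDl.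
- move=> c _ [a [_ [Ka [r ->] ->]]]; exists (c * a), (c * r * y).
  by split; [apply: KM | exists (c * r) | rewrite mulrDr mulrA].
Qed.

Lemma sum_principal0 K : is_ideal K -> sum_ideal K (principal 0) = K.
Proof.
case=> K0 _ _; apply: subI_eq.
- by move=> _ [a [_ [Ka [r ->] ->]]]; rewrite mulr0 addr0.
- by apply: sum_ideal_subl; apply: principal0.
Qed.

End IdealArithmetic.

Arguments subI_refl {R} A [x].

Section Reductions.
Context {R : comNzRingType}.
Implicit Types (J K L M : R -> Prop).

Lemma reduction_refl K : is_reduction K K.
Proof. by split => //; exists 1%N. Qed.

Lemma pow_ideal_reduction J M b j : is_ideal M ->
  eqI (pow_ideal M b.+1) (prod_ideal J (pow_ideal M b)) ->
  subI (pow_ideal M (j + b)) (prod_ideal (pow_ideal J j) (pow_ideal M b)).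
Proof.
move=> idM /eqI_eq JM; elim: j => [|j IHj].
  by rewrite prod_idealTl //; apply: pow_ideal_is_ideal.
rewrite addSn; apply: subI_trans (prod_idealS (subI_refl M) IHj) _.
rewrite -prod_idealA (prod_idealC M) prod_idealA -/(pow_ideal M b.+1) JM.
by rewrite -prod_idealA (prod_idealC _ J).
Qed.

Lemma reduction_trans K J M : is_ideal M ->
  is_reduction J M -> is_reduction K J -> is_reduction K M.
Proof.
move=> idM [JM [b [_ redJ]]] [KJ [a [a_gt0 /eqI_eq redK]]].
split; first exact: subI_trans KJ JM.
exists (a + b)%N; split; first by rewrite addn_gt0 a_gt0.
apply: subI_antisym; last by apply: prod_idealS; first exact: subI_trans KJ JM.
(* M^(a+b+1) <= J^(a+1) M^b = K J^a M^b <= K M^(a+b) *)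
rewrite -addSn; apply: subI_trans (pow_ideal_reduction idM redJ) _.
rewrite redK prod_idealA; apply: prod_idealS => //.
by apply: subI_trans (pow_idealD idM); apply: prod_idealS => //; apply: pow_idealS.
Qed.

Lemma pow_sum_ideal K L j : L 0 ->
  subI (pow_ideal (sum_ideal K L) j.+1)
       (sum_ideal (pow_ideal K j.+1) (prod_ideal L (pow_ideal (sum_ideal K L) j))).
Proof.
move=> L0; set M := sum_ideal K L.
have KM : subI K M by apply: sum_ideal_subl.
elim: j => [|j IHj]; first exact: prod_sum_idealDl.
apply: prod_ideal_ind.
- by apply: sum_ideal0; apply: prod_ideal0.
- by move=> u v; apply: sum_idealD; apply: prod_idealD.
move=> _ w [k [l [Kk Ll ->]]] Mw; have [u [v [Ku LMv defw]]] := IHj _ Mw.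
have LMkv : prod_ideal L (pow_ideal M j.+1) (k * v).
  move: v LMv {defw}; apply: (prod_ideal_ind (P := fun v => prod_ideal L _ (k * v))).
  - by rewrite mulr0; apply: prod_ideal0.
  - by move=> v v'; rewrite mulrDr; apply: prod_idealD.
  - move=> l' w' Ll' Mw'; rewrite mulrCA; apply: prod_ideal_mul => //.
    by apply: prod_ideal_mul => //; apply: KM.
exists (k * u), (k * v + l * w); split; first exact: prod_ideal_mul.
  by apply: prod_idealD => //; apply: prod_ideal_mul.
by rewrite mulrDl defw mulrDr addrA.
Qed.

Lemma reduction_sum K' K L : K' 0 -> L 0 ->
  is_reduction K' K -> is_reduction (sum_ideal K' L) (sum_ideal K L).
Proof.
move=> K'0 L0 [K'K [m [m_gt0 /eqI_eq redK]]].
have K'LKL : subI (sum_ideal K' L) (sum_ideal K L) := sum_idealS K'K (subI_refl L).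
split => //; exists m; split => //; apply: subI_antisym; last first.
  exact: prod_idealS K'LKL (subI_refl _).
apply: subI_trans (pow_sum_ideal (K := K) L0) _.
move=> _ [u [v [Ku LMv ->]]]; apply: prod_idealD.
- move: Ku; rewrite redK; apply: prod_idealS; first exact: sum_ideal_subl.
  exact: pow_idealS (sum_ideal_subl L0).
- by move: LMv; apply: prod_idealS => //; apply: sum_ideal_subr.
Qed.

Lemma reduction_rad K' K : is_ideal K' -> is_reduction K' K -> subI (rad K) (rad K').
Proof.
move=> idK' [_ [m [_ redK]]] x [k Kxk]; exists (k * m.+1)%N; rewrite exprM.
by apply: (prod_ideal_subl (B := pow_ideal K m) idK'); apply/redK; apply: pow_ideal_exp.
Qed.

End Reductions.

Section GeneratedIdeals.
Context {R : comNzRingType}.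

Lemma gen_ideal_is_ideal n (g : 'I_n -> R) : is_ideal (gen_ideal g).
Proof.
split.
- by exists (fun _ => 0); rewrite big1 // => i _; rewrite mul0r.
- move=> _ _ [c ->] [d ->]; exists (fun i => c i + d i).
  by rewrite -big_split; apply: eq_bigr => i _; rewrite mulrDl.
- move=> a _ [c ->]; exists (fun i => a * c i).
  by rewrite big_distrr; apply: eq_bigr => i _ /=; rewrite mulrA.
Qed.

Lemma gen_ideal_sub n (g : 'I_n -> R) I :
  is_ideal I -> (forall i, I (g i)) -> subI (gen_ideal g) I.
Proof. by case=> I0 ID IM Ig _ [c ->]; apply: (big_ind I) => // i _; apply: IM. Qed.

Definition extend n (g : 'I_n -> R) y : 'I_n.+1 -> R :=
  fun i => if unlift ord_max i is Some j then g j else y.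

Lemma extend_widen n (g : 'I_n -> R) y i : extend g y (widen_ord (leqnSn n) i) = g i.
Proof.
have -> : widen_ord (leqnSn n) i = lift ord_max i.
  by apply: val_inj; rewrite /= /bump leqNgt ltn_ord.
by rewrite /extend liftK.
Qed.

Lemma extend_max n (g : 'I_n -> R) y : extend g y ord_max = y.
Proof. by rewrite /extend unlift_none. Qed.

Lemma gen_ideal_extend n (g : 'I_n -> R) y :
  gen_ideal (extend g y) = sum_ideal (gen_ideal g) (principal y).
Proof.
apply: subI_eq => x.
- case=> c ->; rewrite big_ord_recr /= extend_max.
  exists (\sum_(i < n) c (widen_ord (leqnSn n) i) * g i), (c ord_max * y).
  split; [by exists (fun i => c (widen_ord (leqnSn n) i)) | by exists (c ord_max) |].
  by congr (_ + _); apply: eq_bigr => i _; rewrite extend_widen.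
- case=> _ [_ [[c ->] [r ->] ->]]; exists (extend c r).
  rewrite big_ord_recr /= !extend_max.
  by congr (_ + _); apply: eq_bigr => i _; rewrite !extend_widen.
Qed.

Lemma n_generated_leq m n (K : R -> Prop) : (m <= n)%N -> n_generated m K -> n_generated n K.
Proof.
move=> /subnKC <-; elim: (n - m)%N => [|k IHk]; first by rewrite addn0.
move=> /IHk [g /eqI_eq defK]; rewrite addnS; exists (extend g 0).
rewrite gen_ideal_extend -defK sum_principal0 // defK; exact: gen_ideal_is_ideal.
Qed.

End GeneratedIdeals.

Lemma noetherian_sum_principal_closed (R : comNzRingType) (I : R -> Prop)
    (P : (R -> Prop) -> Prop) K0 :
  noetherian R -> (forall K, P K -> is_ideal K /\ subI K I) -> P K0 ->
  (forall K y, P K -> I y -> P (sum_ideal K (principal y))) -> P I.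
Proof.
move=> noethR PK PK0 Padd; apply: NNPP => notPI.
have grow K : P K -> exists y, I y /\ ~ K y.
  move=> PKK; apply: NNPP => noy; apply: notPI.
  suff <- : K = I by [].
  apply: subI_eq; first by case: (PK K PKK).
  by move=> y Iy; apply: NNPP => notKy; apply: noy; exists y.
pose pick K := epsilon (inhabits 0) (fun y => I y /\ ~ K y).
pose chain k := iter k (fun K => sum_ideal K (principal (pick K))) K0.
have Pchain k : P (chain k).
  elim: k => [|k IHk]; first exact: PK0.
  have [Ipick _] := epsilon_spec (inhabits 0) _ (grow _ IHk).
  exact: Padd IHk Ipick.
have [N stable] := noethR chain (fun k => (PK _ (Pchain k)).1)
  (fun k => sum_ideal_subl (principal0 _)).
case: (epsilon_spec (inhabits 0) _ (grow _ (Pchain N))) => _; apply.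
apply/(stable N.+1 (leqnSn N)); apply: sum_ideal_subr; last exact: principal_id.
by case: (PK _ (Pchain N)) => [[]].
Qed.

Section ReductionFromSubideals.
Variables (R : comNzRingType) (I : R -> Prop) (n : nat).
Hypothesis idI : is_ideal I.
Hypothesis reducible : forall J : R -> Prop, is_ideal J -> n_generated n.+1 J ->
  subI J I -> eqI (rad J) (rad I) -> has_n_gen_reduction n J.

Definition n_reducible_subideal (K : R -> Prop) :=
  [/\ is_ideal K, subI K I, subI (rad I) (rad K) & has_n_gen_reduction n K].

Lemma n_reducible_subideal_gen m (x : 'I_m -> R) : (m <= n)%N ->
  (forall i, I (x i)) -> subI (rad I) (rad (gen_ideal x)) ->
  n_reducible_subideal (gen_ideal x).
Proof.
move=> le_mn Ix radI; split => //; first exact: gen_ideal_is_ideal.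
  exact: gen_ideal_sub.
exists (gen_ideal x); split; first exact: gen_ideal_is_ideal.
split; last exact: reduction_refl.
by apply: n_generated_leq le_mn _; exists x.
Qed.

Lemma n_reducible_subideal_add K y : n_reducible_subideal K -> I y ->
  n_reducible_subideal (sum_ideal K (principal y)).
Proof.
move=> [idK KI radIK [K' [idK' [[g /eqI_eq defK'] redK'K]]]] Iy.
have KKy : subI K (sum_ideal K (principal y)) := sum_ideal_subl (principal0 y).
have KyI : subI (sum_ideal K (principal y)) I.
  case: idI => _ ID IM _ [a [_ [Ka [r ->] ->]]].
  exact: ID (KI _ Ka) (IM _ _ Iy).
have idKy := sum_principal_is_ideal y idK.
split => //; first exact: subI_trans radIK (radS KKy).
set J := sum_ideal K' (principal y).
have K'yKy : subI J (sum_ideal K (principal y)).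
  exact: sum_idealS redK'K.1 (subI_refl _).
have [K'' [idK'' [genK'' redK''J]]] : has_n_gen_reduction n J.
  apply: reducible.
  - exact: sum_principal_is_ideal.
  - by exists (extend g y); rewrite /J defK' gen_ideal_extend.
  - exact: subI_trans K'yKy KyI.
  - apply: subI_antisym; first exact: radS (subI_trans K'yKy KyI).
    apply: subI_trans radIK (subI_trans (reduction_rad idK' redK'K) _).
    exact: radS (sum_ideal_subl (principal0 y)).
exists K''; split => //; split => //.
apply: reduction_trans idKy _ redK''J.
by apply: reduction_sum; [case: idK' | exact: principal0 |].
Qed.

End ReductionFromSubideals.

Theorem lemma2p3 (R : comNzRingType) (I : R -> Prop) (n : nat) :
  noetherian R -> proper_ideal I -> ara_le I n ->
  (forall J : R -> Prop, is_ideal J -> n_generated n.+1 J -> subI J I ->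
     eqI (rad J) (rad I) -> has_n_gen_reduction n J) ->
  has_n_gen_reduction n I.
Proof.
move=> noethR [idI _] [m [le_mn [x [Ix radI]]]] reducible.
suff [] : n_reducible_subideal I n I by [].
apply: (noetherian_sum_principal_closed (K0 := gen_ideal x)) => //.
- by move=> K [].
- by apply: n_reducible_subideal_gen => // z /radI.
- by move=> K y; apply: n_reducible_subideal_add.
Qed.
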